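(* Let $M(k,l,m,n)=\langle x,y \mid y^m=x^l,\ x^n=1,\ y^{-1}xy=x^k\rangle$ be a metacyclic group, where $\gcd(n,k)=1$, $k^m\equiv 1 \pmod n$ and $l(k-1)\equiv 0\pmod n$. Let $I$ be a set of integers containing exactly one representative of each orbit of the action of the cyclic group $K=\langle y\rangle$ on $\mathbb{Z}/n$ given by $y\cdot u = ku$. For $a\in I$ let $Ka=\{ak^i \bmod n : i\ge 0\}$ be its orbit and $r_a=|Ka|$. For $a,b,c\in I$ put $$S(a,b,c)=\big|\{(r,s)\in Ka\times Kb : r+s\equiv c \pmod n\}\big|,$$ and for $a\in I$ and an integer $\alpha$ put $$e_{a,\alpha}=\frac{n}{\gcd(n,l)}\Big(\alpha+\Big\{\frac{al}{n}\Big\}\Big),$$ where $\{t\}$ denotes the fractional part of $t$ (this is an integer). Let $a,b,c\in I$ with $S(a,b,c)\neq 0$, and let $0\le \alpha<r_c$, $0\le\beta<r_b$, $0\le \gamma<r_c$. Then $$e_{a,\alpha}+e_{b,\beta}-e_{c,\gamma}\equiv 0 \pmod{\frac{n}{\gcd(n,l)}}.$$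
   Context: Here $\gcd(n,0)=n$. The integer $e_{a,\alpha}$ equals $\frac{n\alpha+al-n\lfloor al/n\rfloor}{\gcd(n,l)}$. *)

From HB Require Import structures.
From mathcomp Require Import all_boot all_order all_algebra.
From mathcomp Require Import boolp.
Set Implicit Arguments. Unset Strict Implicit. Unset Printing Implicit Defensive.
Import Order.TTheory GRing.Theory Num.Theory.
Local Open Scope ring_scope.

(* Residues mod n are represented by integers in [0, n). *)

Definition inOrbit (n : nat) (k a x : int) : Prop :=
  exists i : nat, x = ((a * k ^+ i) %% n%:Z)%Z.

Definition orbit_size (n : nat) (k a : int) : nat :=
  #|[set x : 'I_n | `[< inOrbit n k a (x : nat)%:Z >]]|.

Definition Scount (n : nat) (k a b c : int) : nat :=
  #|[set p : 'I_n * 'I_n |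
      `[< inOrbit n k a (p.1 : nat)%:Z /\ inOrbit n k b (p.2 : nat)%:Z /\
          (((p.1 : nat)%:Z + (p.2 : nat)%:Z) = c %[mod n%:Z])%Z >]]|.

Definition e_coef (n : nat) (l a alpha : int) : int :=
  ((n%:Z * alpha + a * l - n%:Z * ((a * l) %/ n%:Z)%Z) %/ gcdz n%:Z l)%Z.

Definition orbit_reps (n : nat) (k : int) (I : int -> Prop) : Prop :=
  forall u : int, exists! a : int, I a /\ inOrbit n k a (u %% n%:Z)%Z.

From HB Require Import structures.
From mathcomp Require Import all_boot all_order all_algebra.
From mathcomp Require Import boolp.
From mathcomp Require Import ring.
Import Order.TTheory GRing.Theory Num.Theory.
Local Open Scope ring_scope.

(* With g = gcd(n, l), e_{x,alpha} = (n/g) (alpha - floor(x l / n)) + x (l/g), so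
   modulo n/g the sum e_{a,alpha} + e_{b,beta} - e_{c,gamma} is (a + b - c) (l/g),
   which vanishes as soon as n divides (a + b - c) l.  Since l k = l mod n, the
   map u |-> u l is constant on each K-orbit mod n; a pair (r, s) in Ka x Kb with
   r + s = c mod n, which exists because S(a,b,c) <> 0, then gives
   (a + b - c) l = (r + s - c) l = 0 mod n. *)

Lemma mul_exprz_mod (n l k : int) (i : nat) :
  (n %| l * (k - 1))%Z -> (l * k ^+ i = l %[mod n])%Z.
Proof.
move=> nl; apply/eqP; rewrite eqz_mod_dvd; elim: i => [|i IHi].
  by rewrite expr0 mulr1 subrr dvdz0.
have -> : l * k ^+ i.+1 - l = (l * k ^+ i - l) * k + l * (k - 1).
  by rewrite exprS; ring.
by rewrite rpredD // dvdz_mulr.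
Qed.

Section OrbitCongruence.

Local Set Implicit Arguments.
Local Unset Strict Implicit.

Variables (n : nat) (k l : int).
Hypothesis nl : (n%:Z %| l * (k - 1))%Z.

Lemma inOrbit_mulr_mod (a x : int) :
  inOrbit n k a x -> (x * l = a * l %[mod n%:Z])%Z.
Proof.
move=> [i ->].
by rewrite modzMml -mulrA [k ^+ i * l]mulrC -modzMmr mul_exprz_mod // modzMmr.
Qed.

Lemma Scount_neq0_dvdz (a b c : int) :
  Scount n k a b c <> 0%N -> (n%:Z %| (a + b - c) * l)%Z.
Proof.
move=> /eqP; rewrite -lt0n => /card_gt0P [[r s]].
rewrite inE => /asboolP /= [ar [bs rsc]].
have rsc_l : (((r : nat)%:Z + (s : nat)%:Z) * l = c * l %[mod n%:Z])%Z.
  by rewrite -modzMml rsc modzMml.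
suff : ((a + b) * l = c * l %[mod n%:Z])%Z by move/eqP; rewrite eqz_mod_dvd mulrBl.
rewrite mulrDl -modzDml -modzDmr -(inOrbit_mulr_mod ar) -(inOrbit_mulr_mod bs).
by rewrite modzDml modzDmr -mulrDl rsc_l.
Qed.

End OrbitCongruence.

Lemma dvdz_div_common (d n l x : int) :
  (d %| n)%Z -> (d %| l)%Z -> (n %| x * l)%Z -> ((n %/ d)%Z %| x * (l %/ d)%Z)%Z.
Proof.
move=> dn dl nxl; have [->|d0] := eqVneq d 0; first by rewrite !divz0 mulr0 dvdz0.
by rewrite -(dvdz_mul2r d0) -mulrA (divzK dn) (divzK dl).
Qed.

Lemma e_coef_mod (n : nat) (l x alpha : int) : (0 < n)%N ->
  ((n%:Z %/ gcdz n%:Z l)%Z %| e_coef n l x alpha - x * (l %/ gcdz n%:Z l)%Z)%Z.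
Proof.
move=> n_gt0; rewrite /e_coef.
set g := gcdz n%:Z l; set q := ((x * l) %/ n%:Z)%Z.
set N := (n%:Z %/ g)%Z; set l' := (l %/ g)%Z.
have g0 : g != 0 by rewrite gcdz_eq0 negb_and -lt0n n_gt0.
have nE : n%:Z = N * g by rewrite divzK ?dvdz_gcdl.
have lE : l = l' * g by rewrite divzK ?dvdz_gcdr.
have -> : n%:Z * alpha + x * l - n%:Z * q = (N * (alpha - q) + x * l') * g.
  by rewrite nE lE; ring.
by rewrite mulzK // addrK dvdz_mulr.
Qed.

Theorem mainTheorem1 (k l : int) (m n : nat) (I : int -> Prop)
  (hn : (0 < n)%N)
  (hkn : gcdz n%:Z k = 1)
  (hkm : (k ^+ m = 1 %[mod n%:Z])%Z)
  (hlk : (n%:Z %| l * (k - 1))%Z)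
  (hI : orbit_reps n k I)
  (a b c : int) (ha : I a) (hb : I b) (hc : I c)
  (hS : Scount n k a b c <> 0%N)
  (alpha beta gamma : int)
  (halpha : 0 <= alpha < (orbit_size n k c)%:Z)
  (hbeta : 0 <= beta < (orbit_size n k b)%:Z)
  (hgamma : 0 <= gamma < (orbit_size n k c)%:Z) :
  ((n%:Z %/ gcdz n%:Z l)%Z %| e_coef n l a alpha + e_coef n l b beta - e_coef n l c gamma)%Z.
Proof.
have abc_l := Scount_neq0_dvdz hlk hS.
set l' := (l %/ gcdz n%:Z l)%Z.
set ea := e_coef n l a alpha; set eb := e_coef n l b beta; set ec := e_coef n l c gamma.
have -> : ea + eb - ec = (ea - a * l') + (eb - b * l') - (ec - c * l') + (a + b - c) * l'.
  by ring.
apply: rpredD; first by apply: rpredB; [apply: rpredD|]; exact: e_coef_mod.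
exact: dvdz_div_common (dvdz_gcdl _ _) (dvdz_gcdr _ _) abc_l.
Qed.
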